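(* Let $U=(E,\mathcal{D},\rho)$ be a U-matroid, $E=[n]$, with generous matroid extension $\hat U$. Then $\mathcal{B}(\hat U) = \mathrm{conv}(\mathcal{B}(U)\cap\{0,1\}^n) = \mathcal{B}(U)\cap[0,1]^n$, and $\mathcal{I}(\hat U) = \mathrm{conv}(\mathcal{A}(U)\cap\{0,1\}^n) = \mathcal{A}(U)\cap[0,1]^n$.
   Context: A U-matroid is a triple $(E,\mathcal{D},\rho)$ with $E$ finite, $\mathcal{D}\subseteq2^E$ an accessible distributive lattice of sets, and $\rho:\mathcal{D}\to\mathbb{N}$ with $\rho(\emptyset)=0$, monotone, submodular, with unit increase. Its submodular polyhedron is $\mathcal{A}(U)=\{\mathbf{x}\in\mathbb{R}^n:\mathbf{x}(A)\le\rho(A)\ \forall A\in\mathcal{D}\}$ and its base polyhedron is $\mathcal{B}(U)=\{\mathbf{x}\in\mathcal{A}(U):\mathbf{x}(E)=\rho(E)\}$, where $\mathbf{x}(A)=\sum_{a\in A}x_a$. For a matroid $M$, $\mathcal{I}(M)$ is its independence polytope, the convex hull of characteristic vectors of independent sets. The generous matroid extension $\hat U=(E,2^E,\hat\rho)$ is the matroid obtained by iterating the generous atom extension: for $a$ with $\{a\}\notin\mathcal{D}$, on $\mathcal{D}[a]=\mathcal{D}\cup\{S\cup a:S\in\mathcal{D}\}$ set $\rho_a(S)=\rho(S)$ if $S\in\mathcal{D}$, $\rho_a(S)=\rho(S-a)$ if $S\notin\mathcal{D}$ and $\rho(S-a)=\rho(\sup_\mathcal{D}(S))$, and $\rho_a(S)=\rho(S-a)+1$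 otherwise ($\sup_\mathcal{D}(S)$ = smallest element of $\mathcal{D}$ containing $S$), repeating until the lattice is $2^E$; $\hat\rho$ is independent of the order and dominates every matroid extension of $\rho$. *)

From HB Require Import structures.
From mathcomp Require Import all_boot all_order all_algebra.
From mathcomp Require Import reals.
Set Implicit Arguments. Unset Strict Implicit. Unset Printing Implicit Defensive.
Import Order.TTheory GRing.Theory Num.Theory.

Section UMatroid.
Variable n : nat.
Local Notation E := 'I_n.

(* (E, D, rho) is a U-matroid. rho is given on all subsets, but only its
   values on members of D are constrained/used. *)
Definition is_Umatroid (D : {set {set E}}) (rho : {set E} -> nat) : Prop :=
  [/\ set0 \in D, [set: E] \in D &
      (forall A B, A \in D -> B \in D -> (A :|: B \in D) /\ (A :&: B \in D))] /\
  [/\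
      (forall A, A \in D -> A != set0 -> exists2 a, a \in A & A :\ a \in D),
      rho set0 = 0%N,
      (forall A B, A \in D -> B \in D -> A \subset B -> (rho A <= rho B)%N),
      (forall A B, A \in D -> B \in D ->
         (rho (A :|: B) + rho (A :&: B) <= rho A + rho B)%N) &
      (forall A a, A \in D -> A :|: [set a] \in D ->
         (rho (A :|: [set a]) <= (rho A).+1)%N)].

Definition sup_in (D : {set {set E}}) (S : {set E}) : {set E} :=
  \bigcap_(T in D | S \subset T) T.

Definition atom_ext_lat (D : {set {set E}}) (a : E) : {set {set E}} :=
  D :|: [set S :|: [set a] | S in D].

Definition atom_ext_rank (D : {set {set E}}) (rho : {set E} -> nat) (a : E)
    (S : {set E}) : nat :=
  if S \in D then rho S
  else if rho (S :\ a) == rho (sup_in D S) then rho (S :\ a)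
  else (rho (S :\ a)).+1.

Definition gen_step (p : {set {set E}} * ({set E} -> nat)) (a : E)
    : {set {set E}} * ({set E} -> nat) :=
  let: (D, rho) := p in
  if [set a] \in D then p else (atom_ext_lat D a, atom_ext_rank D rho a).

(* rank function of the generous matroid extension: iterate the generous atom
   extension over the atoms a with {a} not in the current lattice, in the
   order 0, 1, ..., n-1 (the result is order independent). *)
Definition gen_ext_rank (D : {set {set E}}) (rho : {set E} -> nat)
    : {set E} -> nat :=
  (foldl gen_step (D, rho) (enum E)).2.

Variable R : realType.
Local Open Scope ring_scope.

Definition xsum (x : 'rV[R]_n) (A : {set E}) : R := \sum_(a in A) x ord0 a.

Definition in_subm_poly (D : {set {set E}}) (rho : {set E} -> nat)
    (x : 'rV[R]_n) : Prop :=
  forall A, A \in D -> xsum x A <= (rho A)%:R.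

Definition in_base_poly (D : {set {set E}}) (rho : {set E} -> nat)
    (x : 'rV[R]_n) : Prop :=
  in_subm_poly D rho x /\ xsum x [set: E] = (rho [set: E])%:R.

Definition chi (X : {set E}) : 'rV[R]_n := \row_(a < n) (a \in X)%:R.

Definition is01 (x : 'rV[R]_n) : Prop := exists X : {set E}, x = chi X.

Definition in_cube (x : 'rV[R]_n) : Prop :=
  forall a : E, 0 <= x ord0 a <= 1.

Definition conv (P : 'rV[R]_n -> Prop) (x : 'rV[R]_n) : Prop :=
  exists (m : nat) (p : 'I_m -> 'rV[R]_n) (l : 'I_m -> R),
    [/\ forall i, P (p i), forall i, 0 <= l i, \sum_(i < m) l i = 1 &
        x = \sum_(i < m) l i *: p i].

Definition in_indep_poly (r : {set E} -> nat) (x : 'rV[R]_n) : Prop :=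
  conv (fun y => exists2 I : {set E}, y = chi I & r I = #|I|) x.

End UMatroid.

(* The generous atom extension preserves two things: the inequality
   rho S <= rho A + |S :\: A| on the lattice, and the family of sets X with
   |X :&: A| <= rho A for every A in the lattice.  Once every atom has been
   added the lattice is 2^E, so these X are exactly the independent sets of
   the generous extension, whose rank agrees with rho on D.

   What remains is the integrality of A(U) /\ [0,1]^n.  At a point x with a
   fractional coordinate, submodularity makes the tight members of D closed
   under intersection.  Either some fractional coordinate i lies in no tight
   set, and x moves both ways along e_i; or the fractional i whose tight hull
   H is smallest has a second fractional coordinate k in H (x(H) = rho(H) is
   an integer), no tight set separates i from k, and x moves both ways along
   e_i - e_k.  Moving until a new constraint becomes tight writes x as a
   convex combination of points with strictly more tight constraints. *)

From HB Require Import structures.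
From mathcomp Require Import all_boot all_order all_algebra.
From mathcomp Require Import reals.
From mathcomp Require Import ring lra zify.
Import Order.TTheory GRing.Theory Num.Theory.
Set Implicit Arguments. Unset Strict Implicit. Unset Printing Implicit Defensive.

Section LatticeRank.
Variable n : nat.
Local Notation E := 'I_n.
Implicit Types (D : {set {set E}}) (rho : {set E} -> nat) (S A B T X Y Z : {set E}).

Definition set_lattice D :=
  [/\ set0 \in D, [set: E] \in D &
      forall A B, A \in D -> B \in D -> (A :|: B \in D) /\ (A :&: B \in D)].

Definition rank_lipschitz D rho :=
  forall S A, S \in D -> A \in D -> rho S <= rho A + #|S :\: A|.

Definition lattice_rank D rho :=
  [/\ set_lattice D, rho set0 = 0 & rank_lipschitz D rho].

Definition indep_in D rho X := forall A, A \in D -> #|X :&: A| <= rho A.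

Lemma setD1_setD S A a : S :\ a :\: A = (S :\: A) :\ a.
Proof. by rewrite setDDl setUC -setDDl. Qed.

Lemma card_sub_setU1 Y Y' a : Y \subset a |: Y' -> #|Y| <= #|Y'|.+1.
Proof.
move=> /subset_leq_card; rewrite cardsU1 => /leq_trans; apply.
by rewrite -add1n leq_add2r leq_b1.
Qed.

Lemma rank_lipschitz_mono D rho S A : rank_lipschitz D rho ->
  S \in D -> A \in D -> S \subset A -> rho S <= rho A.
Proof.
move=> lip SD AD; rewrite -setD_eq0 => /eqP SA0.
by have := lip S A SD AD; rewrite SA0 cards0 addn0.
Qed.

Lemma rank_lipschitz_card D rho S : lattice_rank D rho -> S \in D -> rho S <= #|S|.
Proof.
by case=> [[D0 _ _] rho0 lip] SD; have := lip S set0 SD D0; rewrite rho0 setD0.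
Qed.

Lemma Umatroid_rankU D rho S A : is_Umatroid D rho -> S \in D -> A \in D ->
  rho (S :|: A) <= rho A + #|S :\: A|.
Proof.
case=> [[_ _ closedUI] [access _ _ _ unit_incr]] + AD.
elim: {S}_.+1 {-2}S (ltnSn #|S|) => // k IH S ltSk SD.
have [->|S0] := eqVneq S set0; first by rewrite set0U set0D cards0 addn0.
have [a aS SaD] := access S SD S0.
have IHa : rho (S :\ a :|: A) <= rho A + #|S :\ a :\: A|.
  by apply: IH SaD; rewrite (cardsD1 a S) aS in ltSk.
rewrite (cardsD1 a (S :\: A)) -setD1_setD !inE aS andbT.
have [aA|aA] /= := boolP (a \in A).
  suff -> : S :|: A = S :\ a :|: A by [].
  by apply/setP => x; rewrite !inE; case: eqP => // ->; rewrite aS aA orbT.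
have eSA : S :|: A = (S :\ a :|: A) :|: [set a].
  by apply/setP => x; rewrite !inE; case: eqP => [->|]; rewrite ?aS ?orbF ?orbT.
have SaAD : S :\ a :|: A \in D by case: (closedUI _ _ SaD AD).
have SaAaD : S :\ a :|: A :|: [set a] \in D by rewrite -eSA; case: (closedUI _ _ SD AD).
rewrite eSA; apply: leq_trans (unit_incr _ _ SaAD SaAaD) _.
by rewrite add1n addnS ltnS.
Qed.

Lemma Umatroid_lattice_rank D rho : is_Umatroid D rho -> lattice_rank D rho.
Proof.
move=> U; have [[D0 DT closedUI] [_ rho0 mono _ _]] := U.
split=> // S A SD AD; apply: leq_trans (Umatroid_rankU U SD AD).
by apply: mono => //; [case: (closedUI _ _ SD AD) | exact: subsetUl].
Qed.

Lemma sup_in_sub D S : S \subset sup_in D S.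
Proof. by apply/bigcapsP => T /andP[]. Qed.

Lemma sup_in_min D S B : B \in D -> S \subset B -> sup_in D S \subset B.
Proof. by move=> BD SB; apply: bigcap_inf; rewrite BD SB. Qed.

Lemma sup_in_mem D S B : (forall X Y, X \in D -> Y \in D -> X :&: Y \in D) ->
  B \in D -> S \subset B -> sup_in D S \in D.
Proof.
move=> closedI BD SB; rewrite -(setIidPr (sup_in_min BD SB)) /sup_in.
elim/big_rec: _ => [|T X /andP[TD _] BXD]; first by rewrite setIT.
by rewrite setICA; apply: closedI.
Qed.

Lemma sup_in_lattice D S : set_lattice D -> sup_in D S \in D.
Proof.
case=> _ DT closedUI; apply: sup_in_mem DT (subsetT S).
by move=> X Y XD YD; case: (closedUI _ _ XD YD).
Qed.

Lemma setU_restrict T T' X Y Z : X = T :|: (X :&: Z) -> Y = T' :|: (Y :&: Z) ->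
  X :|: Y = (T :|: T') :|: ((X :|: Y) :&: Z).
Proof. by move=> eX eY; rewrite setIUl setUACA -eX -eY. Qed.

Lemma setI_restrict T T' X Y Z : X = T :|: (X :&: Z) -> Y = T' :|: (Y :&: Z) ->
  X :&: Y = (T :&: T') :|: ((X :&: Y) :&: Z).
Proof.
move=> /setP eX /setP eY; apply/setP => x; move: (eX x) (eY x); rewrite !inE.
by case: (x \in X); case: (x \in Y); case: (x \in T); case: (x \in T');
  case: (x \in Z).
Qed.

Section AtomExtension.
Variables (D : {set {set E}}) (rho : {set E} -> nat) (a : E).
Hypothesis Drho : lattice_rank D rho.
Local Notation D' := (atom_ext_lat D a).
Local Notation rho' := (atom_ext_rank D rho a).

Lemma atom_ext_latP X :
  reflect (exists2 T, T \in D & X = T :|: (X :&: [set a])) (X \in D').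
Proof.
rewrite inE; apply: (iffP orP) => [[XD|/imsetP[T TD ->]]|[T TD eX]].
- by exists X; last by rewrite (setUidPl (subsetIl _ _)).
- by exists T; last by rewrite (setIidPr (subsetUr _ _)).
have [aX|aX] := boolP (a \in X).
  by right; apply/imsetP; exists T; rewrite // (setIidPr _) ?sub1set in eX.
have /eqP XIa0 : X :&: [set a] == set0 by rewrite setI_eq0 disjoint_sym disjoints1.
by left; rewrite eX XIa0 setU0.
Qed.

Lemma sub_atom_ext_lat : {subset D <= D'}.
Proof. by move=> X XD; rewrite inE XD. Qed.

Lemma atom_ext_lattice : set_lattice D'.
Proof.
have [[D0 DT closedUI] _ _] := Drho.
split; rewrite ?sub_atom_ext_lat // => X Y.
move=> /atom_ext_latP[T TD eX] /atom_ext_latP[T' T'D eY].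
have [TUD TID] := closedUI _ _ TD T'D.
split; apply/atom_ext_latP.
- by exists (T :|: T'); last exact: setU_restrict.
- by exists (T :&: T'); last exact: setI_restrict.
Qed.

Lemma atom_ext_lat_new X : X \in D' -> X \notin D -> a \in X /\ X :\ a \in D.
Proof.
rewrite inE => /orP[XD /negP[] //|/imsetP[T TD ->]] XD.
have aT : a \notin T by apply: contra XD => aT; rewrite (setUidPl _) ?sub1set.
by rewrite setUC setU1K // !inE eqxx.
Qed.

Lemma atom_ext_rank_old X : X \in D -> rho' X = rho X.
Proof. by rewrite /atom_ext_rank => ->. Qed.

Lemma atom_ext_rank_new X : X \in D' -> X \notin D ->
  rho' X = rho (X :\ a) /\ rho (X :\ a) = rho (sup_in D X) \/
  rho' X = (rho (X :\ a)).+1 /\ rho (X :\ a) < rho (sup_in D X).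
Proof.
move=> X' XD; have [_ XaD] := atom_ext_lat_new X' XD.
have [latD _ lip] := Drho.
rewrite /atom_ext_rank (negbTE XD); case: eqP => [eq_sup|ne_sup]; [by left | right].
split=> //; rewrite ltn_neqAle; apply/andP; split; first exact/eqP.
apply: rank_lipschitz_mono lip XaD (sup_in_lattice _ latD) _.
exact: subset_trans (subD1set X a) (sup_in_sub D X).
Qed.

Lemma atom_ext_rank_witness X : X \in D' ->
  X :\ a \in D /\ rho' X = (rho (X :\ a)).+1 \/
  exists2 B, B \in D & X \subset B /\ rho' X = rho B.
Proof.
move=> X'; have [XD|XD] := boolP (X \in D).
  by right; exists X; rewrite ?atom_ext_rank_old.
have [_ XaD] := atom_ext_lat_new X' XD; have [latD _ _] := Drho.
case: (atom_ext_rank_new X' XD) => [[-> eq_sup]|[-> _]]; last by left.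
by right; exists (sup_in D X); rewrite ?sup_in_lattice ?sup_in_sub.
Qed.

Lemma atom_ext_lipschitz_old S A : S \in D -> A \in D' ->
  rho' S <= rho' A + #|S :\: A|.
Proof.
have [_ _ lip] := Drho; move=> SD A'; rewrite atom_ext_rank_old //.
case: (atom_ext_rank_witness A') => [[AaD ->]|[B BD [AB ->]]].
- apply: leq_trans (lip _ _ SD AaD) _; rewrite addSn -addnS leq_add2l.
  by apply: (card_sub_setU1 (a := a)); apply/subsetP => x; rewrite !inE; case: eqP.
- by apply: leq_trans (lip _ _ SD BD) _; rewrite leq_add2l; apply/subset_leq_card/setDS.
Qed.

Lemma atom_ext_lipschitz : rank_lipschitz D' rho'.
Proof.
have [latD _ lip] := Drho.
move=> S A S' A'; have [SD|SD] := boolP (S \in D); first exact: atom_ext_lipschitz_old.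
have [aS SaD] := atom_ext_lat_new S' SD.
have SaA_SA : #|S :\ a :\: A| <= #|S :\: A|.
  by rewrite setD1_setD; apply/subset_leq_card/subD1set.
case: (atom_ext_rank_new S' SD) => [[-> _]|[-> lt_sup]].
  rewrite -(atom_ext_rank_old SaD); apply: leq_trans (atom_ext_lipschitz_old SaD A') _.
  by rewrite leq_add2l.
case: (atom_ext_rank_witness A') => [[AaD ->]|[B BD [AB ->]]].
  rewrite addSn ltnS; apply: leq_trans (lip _ _ SaD AaD) _; rewrite leq_add2l.
  apply/subset_leq_card/subsetP => x; rewrite !inE.
  by case: eqP => //= _ /andP[/negbTE -> ->].
have SaB_SaA : #|S :\ a :\: B| <= #|S :\ a :\: A| by apply/subset_leq_card/setDS.
have [aB|aB] := boolP (a \in B).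
  have SaBD : S :\ a :|: B \in D by case: latD => _ _ /(_ _ _ SaD BD) [].
  have sup_sub : sup_in D S \subset S :\ a :|: B.
    apply: sup_in_min => //; apply/subsetP => x xS; rewrite !inE xS andbT.
    by case: eqP => [->|]; rewrite ?aB ?orbT.
  apply: leq_trans lt_sup _.
  apply: leq_trans (rank_lipschitz_mono lip (sup_in_lattice S latD) SaBD sup_sub) _.
  apply: leq_trans (lip _ _ SaBD BD) _.
  by rewrite setDUl setDv setU0 leq_add2l (leq_trans SaB_SaA).
have aA : a \notin A by apply: contra aB; exact: (subsetP AB).
rewrite (cardsD1 a (S :\: A)) -setD1_setD in_setD aS aA addnCA add1n ltnS.
by apply: leq_trans (lip _ _ SaD BD) _; rewrite leq_add2l.
Qed.

Lemma atom_ext_lattice_rank : lattice_rank D' rho'.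
Proof.
have [[D0 _ _] rho0 _] := Drho.
by split; [exact: atom_ext_lattice | rewrite atom_ext_rank_old | exact: atom_ext_lipschitz].
Qed.

Lemma indep_in_atom_ext X : indep_in D' rho' X <-> indep_in D rho X.
Proof.
split=> indX A A'.
  by rewrite -(atom_ext_rank_old A'); apply/indX/sub_atom_ext_lat.
case: (atom_ext_rank_witness A') => [[AaD ->]|[B BD [AB ->]]].
- apply: leq_trans (card_sub_setU1 (_ : _ \subset a |: (X :&: (A :\ a)))) _.
    by apply/subsetP => x; rewrite !inE; case: eqP.
  by rewrite ltnS indX.
- by apply: leq_trans (indX _ BD); apply/subset_leq_card/setIS.
Qed.

End AtomExtension.

Definition lattice_rank_ext (p q : {set {set E}} * ({set E} -> nat)) :=
  [/\ lattice_rank q.1 q.2, {subset p.1 <= q.1}, {in p.1, q.2 =1 p.2} &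
      forall X, indep_in q.1 q.2 X <-> indep_in p.1 p.2 X].

Lemma lattice_rank_ext_trans p q s :
  lattice_rank_ext p q -> lattice_rank_ext q s -> lattice_rank_ext p s.
Proof.
case=> _ pq1 pq2 pq3 [s_rank qs1 qs2 qs3]; split=> //.
- by move=> X /pq1/qs1.
- by move=> X Xp; rewrite qs2 ?pq2 ?pq1.
- by move=> X; rewrite qs3 pq3.
Qed.

Lemma gen_step_ext p a : lattice_rank p.1 p.2 ->
  lattice_rank_ext p (gen_step p a) /\ [set a] \in (gen_step p a).1.
Proof.
case: p => D rho /= Drho; rewrite /gen_step.
case: ifP => [aD|_]; first by split; first split.
split; first split.
- exact: atom_ext_lattice_rank.
- exact: sub_atom_ext_lat.
- exact: atom_ext_rank_old.
- exact: indep_in_atom_ext.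
have [[D0 _ _] _ _] := Drho.
by rewrite inE; apply/orP; right; apply/imsetP; exists set0; rewrite ?set0U.
Qed.

Lemma foldl_gen_step_ext p s : lattice_rank p.1 p.2 ->
  lattice_rank_ext p (foldl (@gen_step n) p s) /\
  {in s, forall a, [set a] \in (foldl (@gen_step n) p s).1}.
Proof.
elim: s p => [|a s IH] p p_rank /=; first by split; first split.
have [p_q aq] := gen_step_ext a p_rank; have [q_rank _ _ _] := p_q.
have [q_s sub_s] := IH _ q_rank; have [_ q_s_sub _ _] := q_s.
split; first exact: lattice_rank_ext_trans q_s.
by move=> b; rewrite inE => /predU1P[->|]; [exact: q_s_sub | exact: sub_s].
Qed.

Section GenerousExtension.
Variables (D : {set {set E}}) (rho : {set E} -> nat).
Hypothesis U : is_Umatroid D rho.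
Local Notation r := (gen_ext_rank D rho).

Lemma gen_ext_spec : lattice_rank_ext (D, rho) ([set: {set E}], r).
Proof.
have [ext singl] := foldl_gen_step_ext (p := (D, rho)) (enum E) (Umatroid_lattice_rank U).
suff full : (foldl (@gen_step n) (D, rho) (enum E)).1 = [set: {set E}] by rewrite -full.
have [[[D0 _ closedUI] _ _] _ _ _] := ext.
apply/setP => X; rewrite inE.
have -> : X = \bigcup_(a in X) [set a].
  by apply/setP => x; apply/idP/bigcupP => [xX|[y yX /set1P -> //]]; exists x; rewrite ?inE.
apply: (big_ind (fun Y => Y \in _)) => //.
  by move=> Y Z YD ZD; case: (closedUI _ _ YD ZD).
by move=> a _; apply: singl; rewrite mem_enum.
Qed.

Lemma gen_ext_lattice_rank : lattice_rank [set: {set E}] r.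
Proof. by case: gen_ext_spec. Qed.

Lemma gen_ext_rank_extends : {in D, r =1 rho}.
Proof. by case: gen_ext_spec. Qed.

Lemma gen_ext_indep X : indep_in [set: {set E}] r X <-> indep_in D rho X.
Proof. by case: gen_ext_spec => _ _ _ ->. Qed.

Lemma gen_ext_rank_indep X : r X = #|X| <-> indep_in D rho X.
Proof.
rewrite -gen_ext_indep; have [_ _ lip] := gen_ext_lattice_rank.
split=> [rX A _|indX].
  by have := lip X A; rewrite !inE rX -(cardsID A X) leq_add2r; apply.
apply/eqP; rewrite eqn_leq (rank_lipschitz_card gen_ext_lattice_rank) ?inE //=.
by have := indX X; rewrite setIid inE; apply.
Qed.

End GenerousExtension.
End LatticeRank.

Section ConvexHull.
Variables (R : realType) (n : nat).
Local Open Scope ring_scope.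
Implicit Types (P Q : 'rV[R]_n -> Prop) (x y z : 'rV[R]_n).

Lemma conv1 P x : P x -> conv P x.
Proof.
move=> Px; exists 1%N, (fun _ => x), (fun _ => 1).
by split=> //; rewrite big_ord1 ?scale1r.
Qed.

Lemma conv_sub P Q x : (forall y, P y -> Q y) -> conv P x -> conv Q x.
Proof. by move=> PQ [m [p [l [Pp l0 l1 ->]]]]; exists m, p, l; split=> // i; apply/PQ. Qed.

Lemma conv_combine P y z (t : R) : conv P y -> conv P z -> 0 <= t <= 1 ->
  conv P (t *: y + (1 - t) *: z).
Proof.
move=> [m1 [p1 [l1 [Pp1 l10 l11 ->]]]] [m2 [p2 [l2 [Pp2 l20 l21 ->]]]] /andP[t0 t1].
have eL i : split (lshift m2 i) = inl i := unsplitK (inl _ i).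
have eR i : split (rshift m1 i) = inr i := unsplitK (inr _ i).
exists (m1 + m2)%N, (fun k => match split k with inl i => p1 i | inr i => p2 i end),
  (fun k => match split k with inl i => t * l1 i | inr i => (1 - t) * l2 i end).
split.
- by move=> k; case: (split k).
- by move=> k; case: (split k) => i; rewrite mulr_ge0 ?subr_ge0.
- rewrite big_split_ord /=; under eq_bigr do rewrite eL.
  under [X in _ + X]eq_bigr do rewrite eR.
  by rewrite -!mulr_sumr l11 l21 !mulr1 addrC subrK.
- rewrite big_split_ord /=; under [X in _ = X + _]eq_bigr do rewrite eL.
  under [X in _ = _ + X]eq_bigr do rewrite eR.
  by rewrite !scaler_sumr; congr (_ + _); apply: eq_bigr => i _; rewrite scalerA.
Qed.

Section LinearFunctional.
Variable f : 'rV[R]_n -> R.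
Hypothesis f_lin : forall y z (t : R), f (y + t *: z) = f y + t * f z.

Lemma lin0 : f 0 = 0.
Proof. by have := f_lin 0 0 1; rewrite scaler0 addr0 mul1r; lra. Qed.

Lemma linN y : f (- y) = - f y.
Proof. by have := f_lin 0 y (-1); rewrite add0r lin0 add0r scaleN1r mulN1r. Qed.

Lemma lin_sum m (l : 'I_m -> R) (p : 'I_m -> 'rV[R]_n) :
  f (\sum_(i < m) l i *: p i) = \sum_(i < m) l i * f (p i).
Proof.
elim/big_rec2: _ => [|i s1 s2 _ IH]; first exact: lin0.
by rewrite -IH addrC f_lin addrC.
Qed.

Lemma conv_le P x c : (forall y, P y -> f y <= c) -> conv P x -> f x <= c.
Proof.
move=> Pc [m [p [l [Pp l0 l1 ->]]]]; rewrite lin_sum.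
apply: le_trans (_ : \sum_(i < m) l i * c <= _).
  by apply: ler_sum => i _; apply: ler_wpM2l => //; apply: Pc.
by rewrite -mulr_suml l1 mul1r.
Qed.

Lemma conv_ge P x c : (forall y, P y -> c <= f y) -> conv P x -> c <= f x.
Proof.
move=> Pc [m [p [l [Pp l0 l1 ->]]]]; rewrite lin_sum.
apply: le_trans (_ : \sum_(i < m) l i * c <= _).
  by rewrite -mulr_suml l1 mul1r.
by apply: ler_sum => i _; apply: ler_wpM2l => //; apply: Pc.
Qed.

Lemma conv_eq P x c : (forall y, P y -> f y = c) -> conv P x -> f x = c.
Proof.
move=> Pc Px; apply/eqP; rewrite eq_le.
by rewrite (conv_le _ Px) ?(conv_ge _ Px) // => y /Pc ->.
Qed.

End LinearFunctional.
End ConvexHull.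

Section Polyhedron.
Variables (R : realType) (n : nat) (J : finType).
Local Open Scope ring_scope.
Variables (L : J -> 'rV[R]_n -> R) (b : J -> R).
Hypothesis L_lin : forall j y z (t : R), L j (y + t *: z) = L j y + t * L j z.

Definition feasible y := forall j, L j y <= b j.

Definition tight y := [set j | L j y == b j].

Definition face_dir x d :=
  [/\ {in tight x, forall j, L j d = 0}, exists j, 0 < L j d & exists j, L j d < 0].

Lemma feasible_conv P x : (forall y, P y -> feasible y) -> conv P x -> feasible x.
Proof. by move=> PF Px j; apply: (conv_le (L_lin j)) Px => y /PF. Qed.

Lemma feasible_move y d : feasible y -> {in tight y, forall j, L j d = 0} ->
    (exists j, 0 < L j d) ->
  exists2 t, 0 < t & feasible (y + t *: d) /\ tight y \proper tight (y + t *: d).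
Proof.
move=> Fy tight0 [j1 dj1].
pose K := [pred j | 0 < L j d].
pose c j := (b j - L j y) / L j d.
have slack j : K j -> 0 < b j - L j y.
  move=> Kj; rewrite subr_gt0 lt_neqAle Fy andbT; apply: contraTneq Kj => eq_b.
  by rewrite inE tight0 ?ltxx // inE eq_b.
have [j0 Kj0 c_min] := arg_minP c (dj1 : K j1).
have c_pos : 0 < c j0 by rewrite divr_gt0 ?slack.
exists (c j0) => //; split.
  move=> j; rewrite L_lin; have [dj|dj] := ltP 0 (L j d).
    by have := c_min j dj; rewrite /c ler_pdivlMr // lerBrDl.
  by have := Fy j; have := mulr_ge0_le0 (ltW c_pos) dj; lra.
apply/properP; split.
  apply/subsetP => j; rewrite !inE L_lin => /eqP eq_b.
  by rewrite tight0 ?mulr0 ?addr0 ?eq_b // inE eq_b.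
exists j0; first by rewrite inE L_lin /c divfK ?lt0r_neq0 // addrC subrK.
by rewrite inE lt_eqF // -subr_gt0 slack.
Qed.

Lemma feasible_split x d : feasible x -> face_dir x d ->
  exists y z (t : R), [/\ feasible y /\ tight x \proper tight y,
    feasible z /\ tight x \proper tight z, 0 <= t <= 1 & x = t *: y + (1 - t) *: z].
Proof.
move=> Fx [tight0 [j1 dj1] [j2 dj2]].
have [t1 t1_pos xy] := feasible_move Fx tight0 (ex_intro _ j1 dj1).
have tight0N : {in tight x, forall j, L j (- d) = 0}.
  by move=> j /tight0; rewrite (linN (L_lin j)) => ->; rewrite oppr0.
have dj2N : 0 < L j2 (- d) by rewrite (linN (L_lin j2)) oppr_gt0.
have [t2 t2_pos xz] := feasible_move Fx tight0N (ex_intro _ j2 dj2N).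
have t12_pos : 0 < t1 + t2 := addr_gt0 t1_pos t2_pos.
exists (x + t1 *: d), (x + t2 *: - d), (t2 / (t1 + t2)); split=> //.
  by rewrite divr_ge0 ?(ltW t2_pos) ?(ltW t12_pos) //= ler_pdivrMr // mul1r lerDr ltW.
have t12_neq0 := lt0r_neq0 t12_pos.
by apply/rowP => k; rewrite !mxE; field.
Qed.

Lemma feasible_conv_decomp (V : pred 'rV[R]_n) :
    (forall x, feasible x -> ~~ V x -> exists d, face_dir x d) ->
  forall x, feasible x -> conv (fun y => [/\ feasible y, V y & tight x \subset tight y]) x.
Proof.
move=> dirs; suff decomp k x : (#|J| - #|tight x| < k)%N -> feasible x ->
    conv (fun y => [/\ feasible y, V y & tight x \subset tight y]) x.
  by move=> x; apply: decomp.
elim: k x => // k IH x ltk Fx.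
have [Vx|nVx] := boolP (V x); first by apply: conv1; split.
have [d xd] := dirs x Fx nVx.
have [y [z [t [[Fy xy] [Fz xz] t01 ex]]]] := feasible_split Fx xd.
have IHw w : feasible w -> tight x \proper tight w ->
    conv (fun v => [/\ feasible v, V v & tight x \subset tight v]) w.
  move=> Fw xw; apply: conv_sub (IH w _ Fw) => [v [Fv Vv wv]|].
    by split=> //; apply: subset_trans wv; apply: proper_sub.
  have := proper_card xw; have := subset_leq_card (subsetT (tight w)).
  by rewrite cardsT; lia.
by rewrite [X in conv _ X]ex; apply: conv_combine => //; apply: IHw.
Qed.

End Polyhedron.

Section CoordinateSums.
Variables (R : realType) (n : nat).
Local Open Scope ring_scope.
Implicit Types (x y : 'rV[R]_n) (A B X : {set 'I_n}).

Lemma xsum_lin x y (t : R) A : xsum (x + t *: y) A = xsum x A + t * xsum y A.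
Proof. by rewrite /xsum mulr_sumr -big_split; apply: eq_bigr => a _; rewrite !mxE. Qed.

Lemma xsumB x y A : xsum (x - y) A = xsum x A - xsum y A.
Proof. by rewrite /xsum -sumrB; apply: eq_bigr => a _; rewrite !mxE. Qed.

Lemma xsum_set1 x a : xsum x [set a] = x ord0 a.
Proof. exact: big_set1. Qed.

Lemma xsumUI x A B : xsum x (A :|: B) + xsum x (A :&: B) = xsum x A + xsum x B.
Proof.
have xsumE C : xsum x C = \sum_a (a \in C)%:R * x ord0 a.
  rewrite /xsum big_mkcond; apply: eq_bigr => a _.
  by case: (a \in C); rewrite ?mul1r ?mul0r.
rewrite !xsumE -!big_split; apply: eq_bigr => a _ /=; rewrite !inE.
by case: (a \in A); case: (a \in B); rewrite ?mul0r ?mul1r ?addr0 ?add0r.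
Qed.

Lemma xsumTD1 x a : xsum x [set: 'I_n] = x ord0 a + xsum x ([set: 'I_n] :\ a).
Proof. by rewrite /xsum (big_setD1 a) ?inE. Qed.

Lemma xsum_chi X A : xsum (chi R X) A = #|X :&: A|%:R.
Proof.
rewrite /xsum (eq_bigr (fun a => if a \in X then 1 else 0)) => [|a _]; last first.
  by rewrite mxE; case: (a \in X).
rewrite -big_mkcondr /= sumr_const; congr (_ *+ _).
by apply: eq_card => a; rewrite !inE andbC.
Qed.

Lemma xsum_chi1 i A : xsum (chi R [set i]) A = (i \in A)%:R.
Proof.
rewrite xsum_chi; have [iA|iA] := boolP (i \in A).
  by rewrite (setIidPl _) ?sub1set // cards1.
by rewrite (_ : _ :&: _ = set0) ?cards0 //; apply/eqP; rewrite setI_eq0 disjoints1.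
Qed.

Lemma chi_cube X : in_cube (chi R X).
Proof. by move=> a; rewrite mxE; case: (a \in X); rewrite ?lexx ?ler01. Qed.

Definition frac x := [set a | 0 < x ord0 a < 1].

Lemma cube_nonfrac x a : in_cube x -> a \notin frac x -> x ord0 a = (x ord0 a == 1)%:R.
Proof.
move=> cx; rewrite inE negb_and -!leNgt; have /andP[x0 x1] := cx a.
case: eqP => [-> //|ne1] /orP[xa0|xa1]; first by apply/eqP; rewrite eq_le xa0 x0.
by case: ne1; apply/eqP; rewrite eq_le x1 xa1.
Qed.

Lemma cube_frac0 x : in_cube x -> frac x = set0 -> x = chi R [set a | x ord0 a == 1].
Proof.
move=> cx fx0; apply/rowP => a; by rewrite mxE inE [LHS]cube_nonfrac // fx0 inE.
Qed.

Lemma xsum_nat_frac_partner x A m i : in_cube x -> xsum x A = m%:R ->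
  i \in A -> i \in frac x -> exists2 k, k \in A :&: frac x & k != i.
Proof.
move=> cx xA iA iF.
have [k /andP[kAF ki]|no_k] := pickP (fun k => (k \in A :&: frac x) && (k != i)).
  by exists k.
have int_rest : \sum_(k in A | k != i) x ord0 k =
    (\sum_(k in A | k != i) (x ord0 k == 1%R : nat))%:R.
  rewrite natr_sum; apply: eq_bigr => k /andP[kA ki].
  by rewrite [LHS]cube_nonfrac //; have := no_k k; rewrite /= inE kA ki andbT andTb => ->.
move: xA; rewrite /xsum (bigD1 i) //= int_rest.
set N := (\sum_(_ in _ | _) _)%N => xA; move: iF; rewrite inE => /andP[xi0 xi1].
have N_m : (N%:R < m%:R :> R) by rewrite -xA; lra.
have m_N : (m%:R < N.+1%:R :> R) by rewrite -natr1 -xA; lra.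
by rewrite !ltr_nat in N_m m_N; lia.
Qed.

End CoordinateSums.

Section SubmodularCube.
Variables (R : realType) (n : nat) (D : {set {set 'I_n}}) (rho : {set 'I_n} -> nat).
Hypothesis U : is_Umatroid D rho.
Local Open Scope ring_scope.
Local Notation E := 'I_n.
Implicit Types (x y : 'rV[R]_n).

Definition subm_cube_lhs (j : {A : {set E} | A \in D} + (E + E)) (y : 'rV[R]_n) : R :=
  match j with
  | inl A => xsum y (val A)
  | inr (inl a) => y ord0 a
  | inr (inr a) => - y ord0 a
  end.

Definition subm_cube_rhs (j : {A : {set E} | A \in D} + (E + E)) : R :=
  match j with
  | inl A => (rho (val A))%:R
  | inr (inl _) => 1
  | inr (inr _) => 0
  end.

Local Notation feasible_sc := (feasible subm_cube_lhs subm_cube_rhs).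
Local Notation tight_sc := (tight subm_cube_lhs subm_cube_rhs).

Lemma subm_cube_lin j y z (t : R) :
  subm_cube_lhs j (y + t *: z) = subm_cube_lhs j y + t * subm_cube_lhs j z.
Proof. by case: j => [A|[a|a]] /=; rewrite ?xsum_lin ?mxE // opprD mulrN. Qed.

Lemma feasible_subm_cube y : feasible_sc y <-> in_subm_poly D rho y /\ in_cube y.
Proof.
split=> [Fy|[sy cy] [[A AD]|[a|a]] /=].
- split=> [A AD|a]; first exact: (Fy (inl (exist _ A AD))).
  by have := Fy (inr (inl a)); have := Fy (inr (inr a)); rewrite /= oppr_le0 => -> ->.
- exact: sy.
- by case/andP: (cy a).
- by rewrite oppr_le0; case/andP: (cy a).
Qed.

Definition tight_sets (x : 'rV[R]_n) := [set A in D | xsum x A == (rho A)%:R].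

Section FaceDirection.
Variable x : 'rV[R]_n.
Hypotheses (sx : in_subm_poly D rho x) (cx : in_cube x).

Lemma tight_setsI A B :
  A \in tight_sets x -> B \in tight_sets x -> A :&: B \in tight_sets x.
Proof.
have [[_ _ closedUI] [_ _ _ submod _]] := U.
rewrite !inE => /andP[AD /eqP xA] /andP[BD /eqP xB].
have [ABD IABD] := closedUI _ _ AD BD; rewrite IABD /=.
have := xsumUI x A B; have := sx ABD; have := sx IABD.
have : ((rho (A :|: B))%:R + (rho (A :&: B))%:R <= (rho A)%:R + (rho B)%:R :> R).
  by rewrite -!natrD ler_nat submod.
by rewrite xA xB => *; apply/eqP; lra.
Qed.

Lemma face_dir_of_coords d : {in tight_sets x, forall A, xsum d A = 0} ->
    (forall a, a \notin frac x -> d ord0 a = 0) -> (exists a, 0 < d ord0 a) ->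
  face_dir subm_cube_lhs subm_cube_rhs x d.
Proof.
move=> d_tight d_frac [a da]; split.
- move=> [[A AD]|[b|b]]; rewrite inE /= => /eqP xb.
  + by apply: d_tight; rewrite inE AD xb eqxx.
  + by apply: d_frac; rewrite inE xb ltxx andbF.
  + move/eqP: xb; rewrite oppr_eq0 => /eqP xb.
    by rewrite d_frac ?oppr0 // inE xb ltxx.
- by exists (inr (inl a)).
- by exists (inr (inr a)); rewrite /= oppr_lt0.
Qed.

Lemma frac_inseparable_pair : frac x != set0 ->
    (forall j, j \in frac x -> exists2 A, A \in tight_sets x & j \in A) ->
  exists i k, [/\ i \in frac x, k \in frac x, k != i &
    forall A, A \in tight_sets x -> (i \in A) = (k \in A)].
Proof.
move=> /set0Pn[i0 i0F] covered.
pose hull j := sup_in (tight_sets x) [set j].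
have hull_tight j : j \in frac x -> hull j \in tight_sets x.
  by move=> /covered[A TA jA]; apply: sup_in_mem tight_setsI TA _; rewrite sub1set.
have hull_min j A : A \in tight_sets x -> j \in A -> hull j \subset A.
  by move=> TA jA; apply: sup_in_min; rewrite ?sub1set.
have in_hull j : j \in hull j by rewrite -sub1set sup_in_sub.
have [i iF hull_i_min] := arg_minnP (fun j => #|hull j|) i0F.
have [k /setIP[k_hull kF] ki] : exists2 k, k \in hull i :&: frac x & k != i.
  have := hull_tight i iF; rewrite inE => /andP[_ /eqP x_hull].
  exact: xsum_nat_frac_partner cx x_hull (in_hull i) iF.
exists i, k; split=> // A TA; apply/idP/idP => [iA|kA].
  exact: subsetP (hull_min i A TA iA) k k_hull.
have hull_ki : hull k \subset hull i := hull_min k _ (hull_tight i iF) k_hull.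
have e_hull : hull k = hull i by apply/eqP; rewrite eqEcard hull_ki hull_i_min.
by apply: (subsetP (hull_min k A TA kA)); rewrite e_hull.
Qed.

Lemma subm_cube_face_dir :
  frac x != set0 -> exists d, face_dir subm_cube_lhs subm_cube_rhs x d.
Proof.
move=> frac_x.
have [/existsP[i /andP[iF /forallP untight]]|] := boolP
    [exists i, (i \in frac x) && [forall A, (A \in tight_sets x) ==> (i \notin A)]].
  exists (chi R [set i]); apply: face_dir_of_coords.
  - by move=> A TA; rewrite xsum_chi1; have := untight A; rewrite TA => /negbTE ->.
  - by move=> a aF; rewrite mxE inE; case: eqP => // eai; move: aF; rewrite eai iF.
  - by exists i; rewrite mxE inE eqxx ltr01.
rewrite negb_exists => /forallP not_untight.
have covered j : j \in frac x -> exists2 A, A \in tight_sets x & j \in A.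
  move=> jF; have := not_untight j; rewrite jF negb_forall => /existsP[A].
  by rewrite negb_imply negbK => /andP[TA jA]; exists A.
have [i [k [iF kF ki inseparable]]] := frac_inseparable_pair frac_x covered.
exists (chi R [set i] - chi R [set k]); apply: face_dir_of_coords.
- by move=> A TA; rewrite xsumB !xsum_chi1 inseparable ?subrr.
- move=> a aF; rewrite !mxE !inE.
  have [eai|ai] := eqVneq a i; first by rewrite eai iF in aF.
  by have [eak|ak] := eqVneq a k; [rewrite eak kF in aF | rewrite subrr].
- by exists i; rewrite !mxE !inE eqxx eq_sym (negbTE ki) subr0 ltr01.
Qed.

End FaceDirection.

Lemma subm_cube_decomp x : in_subm_poly D rho x -> in_cube x ->
  conv (fun y => [/\ feasible_sc y, frac y == set0 & tight_sc x \subset tight_sc y]) x.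
Proof.
move=> sx cx; apply: (feasible_conv_decomp subm_cube_lin); last exact/feasible_subm_cube.
by move=> y /feasible_subm_cube[sy cy]; apply: subm_cube_face_dir.
Qed.

Lemma subm_poly_chi X : in_subm_poly D rho (chi R X) <-> indep_in D rho X.
Proof. by split=> indX A AD; have := indX A AD; rewrite xsum_chi ler_nat. Qed.

Lemma conv01_subm_cube x :
  conv (fun y => in_subm_poly D rho y /\ is01 y) x <-> in_subm_poly D rho x /\ in_cube x.
Proof.
split=> [Px|[sx cx]].
  apply/feasible_subm_cube; apply: (feasible_conv subm_cube_lin) Px => y [sy [X eyX]].
  by apply/feasible_subm_cube; split=> //; rewrite eyX; apply: chi_cube.
apply: conv_sub (subm_cube_decomp sx cx) => y [/feasible_subm_cube[sy cy] /eqP fy0 _].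
by split=> //; exists [set a | y ord0 a == 1]; apply: cube_frac0.
Qed.

Lemma conv01_base_cube x :
  conv (fun y => in_base_poly D rho y /\ is01 y) x <-> in_base_poly D rho x /\ in_cube x.
Proof.
have [[_ DT _] _] := U; have xsumT_lin := fun y z t => xsum_lin y z t [set: E].
split=> [Px|[[sx xT] cx]].
  have [sx cx] : in_subm_poly D rho x /\ in_cube x.
    by apply/conv01_subm_cube; apply: conv_sub Px => y [[sy _] y01].
  by split=> //; split=> //; apply: (conv_eq xsumT_lin) Px => y [[_ yT] _].
apply: conv_sub (subm_cube_decomp sx cx) => y [Fy /eqP fy0 xy].
have [sy cy] := (feasible_subm_cube y).1 Fy.
have : inl (exist _ [set: E] DT) \in tight_sc y by apply: (subsetP xy); rewrite inE /= xT.
rewrite inE /= => /eqP yT.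
by split; [split | exists [set a | y ord0 a == 1]; apply: cube_frac0].
Qed.

Local Notation r := (gen_ext_rank D rho).

Lemma indep_poly_gen_ext x :
  in_indep_poly r x <-> conv (fun y => in_subm_poly D rho y /\ is01 y) x.
Proof.
split; apply: conv_sub => y.
  by case=> I -> /(gen_ext_rank_indep U) indI; split; [exact/subm_poly_chi | exists I].
case=> sy [X eyX]; exists X => //.
by apply/(gen_ext_rank_indep U)/subm_poly_chi; rewrite -eyX.
Qed.

Lemma base_poly_gen_ext x :
  in_base_poly [set: {set E}] r x <-> conv (fun y => in_base_poly D rho y /\ is01 y) x.
Proof.
have [[_ DT _] _] := U; have r_rank := gen_ext_lattice_rank U.
have [_ _ lip] := r_rank; have r_rho := gen_ext_rank_extends U.
split=> [[sx xT]|Px].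
  apply/conv01_base_cube; split; first split.
  - by move=> A AD; rewrite -r_rho //; apply: sx; rewrite inE.
  - by rewrite xT r_rho.
  move=> a; apply/andP; split.
    have := sx _ (in_setT ([set: E] :\ a)); have := xsumTD1 x a.
    have : (r ([set: E] :\ a) <= r [set: E])%N.
      by apply: rank_lipschitz_mono lip _ _ (subsetT _); rewrite inE.
    by rewrite -(ler_nat R) xT; lra.
  have := sx _ (in_setT [set a]); rewrite xsum_set1.
  have := rank_lipschitz_card r_rank (in_setT [set a]); rewrite cards1 -(ler_nat R).
  by lra.
split.
  move=> A _; apply: (conv_le (fun y z t => xsum_lin y z t A)) Px => y [[sy _] [X eyX]].
  rewrite eyX xsum_chi ler_nat; rewrite eyX in sy.
  by have /subm_poly_chi/(gen_ext_indep U) := sy; apply; rewrite inE.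
by rewrite r_rho //; apply: (conv_eq (fun y z t => xsum_lin y z t _)) Px => y [[_ yT] _].
Qed.

End SubmodularCube.

Theorem theorem4p14 (R : realType) (n : nat) (D : {set {set 'I_n}})
    (rho : {set 'I_n} -> nat) :
  is_Umatroid D rho ->
  [/\ (forall x : 'rV[R]_n,
         in_base_poly [set: {set 'I_n}] (gen_ext_rank D rho) x <->
         conv (fun y => in_base_poly D rho y /\ is01 y) x),
      (forall x : 'rV[R]_n,
         conv (fun y => in_base_poly D rho y /\ is01 y) x <->
         in_base_poly D rho x /\ in_cube x),
      (forall x : 'rV[R]_n,
         in_indep_poly (gen_ext_rank D rho) x <->
         conv (fun y => in_subm_poly D rho y /\ is01 y) x) &
      (forall x : 'rV[R]_n,
         conv (fun y => in_subm_poly D rho y /\ is01 y) x <->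
         in_subm_poly D rho x /\ in_cube x)].
Proof.
move=> U; split=> x.
- exact: base_poly_gen_ext.
- exact: conv01_base_cube.
- exact: indep_poly_gen_ext.
- exact: conv01_subm_cube.
Qed.
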